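(* Let $f=(f_0,f_1)\in F\times F$ be such that $P_1^f\ll P_0^f$, and let $T$ be an anonymous comparison test that is error-free. Then $P_0^f(\{T(\cdot,f)=0\})<1$.
   Context: Let $\Omega=\{0,1\}$ and let $\Omega^\infty$ be the set of infinite sequences $\omega=(\omega_1,\omega_2,\dots)$ with $\omega_t\in\Omega$; $\omega^t=(\omega_1,\dots,\omega_t)$ denotes the prefix of length $t$ and also the cylinder set $\{\hat\omega\in\Omega^\infty:\hat\omega^t=\omega^t\}$. $\Omega^\infty$ carries the $\sigma$-algebra generated by all cylinders. $\Delta(\Omega)$ is the set of probability distributions on $\Omega$. A forecasting strategy is a function $f:\bigcup_{t\ge 0}(\Omega\times\Delta(\Omega)\times\Delta(\Omega))^t\to\Delta(\Omega)$; $F$ denotes the set of all forecasting strategies. For a pair $f=(f_0,f_1)\in F\times F$ and $\omega\in\Omega^\infty$, the play path $h=h(\omega,f_0,f_1)\in(\Omega\times\Delta(\Omega)\times\Delta(\Omega))^\infty$ is defined recursively by $h^0=\emptyset$ and $h^t=(h^{t-1},(\omega_t,f_0(h^{t-1}),f_1(h^{t-1})))$; $h^n$ denotes its prefix of length $n$ and $h_n$ its suffix starting at coordinate $n$. The pair $f$ induces probability measures $P_0^f,P_1^f$ on $\Omega^\infty$ determined by $P_i^f(\omega^t)=\prod_{n=1}^t f_i(h^{n-1}(\omega,f_0,f_1))[\omega_n]$. A comparison test is a function $T:\Omega^\infty\times F\times F\to\{0,\tfrac12,1\}$, measurable in $\omega$ for each fixed pair; $T=i\in\{0,1\}$ means expert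 $i$ is deemed better informed, $T=\tfrac12$ means inconclusive. Write $\{T(\cdot,f)=k\}=\{\omega: T(\omega,f_0,f_1)=k\}$. $T$ is anonymous if $T(\omega,f_0,f_1)=1-T(\omega,f_1,f_0)$ for all $\omega,f_0,f_1$. $T$ is error-free if for all $f\in F\times F$ and $i\in\{0,1\}$, $P_{1-i}^f(\{T(\cdot,f)=i\})=0$. *)

From Stdlib Require Import Reals List.
Import ListNotations.
Open Scope R_scope.

(** Omega = {0,1} is [bool] (false = 0, true = 1).
    An infinite sequence omega = (omega_1, omega_2, ...) is [nat -> bool],
    with [w k] standing for omega_{k+1}. *)
Definition Seq := nat -> bool.

(** Delta(Omega): probability distributions on {0,1}, given by the
    probability [p1] of outcome 1. *)
Record Dist := mkDist { p1 : R; p1_nonneg : 0 <= p1; p1_le1 : p1 <= 1 }.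

Definition dprob (d : Dist) (b : bool) : R := if b then p1 d else 1 - p1 d.

(** Finite histories (Omega x Delta x Delta)^t, as lists in chronological order. *)
Definition Hist := list (bool * Dist * Dist).

Definition Strategy := Hist -> Dist.

Fixpoint hist (w : Seq) (f0 f1 : Strategy) (t : nat) : Hist :=
  match t with
  | O => []
  | S n => hist w f0 f1 n ++ [(w n, f0 (hist w f0 f1 n), f1 (hist w f0 f1 n))]
  end.

Definition cyl (w : Seq) (t : nat) : Seq -> Prop :=
  fun v => forall k, (k < t)%nat -> v k = w k.

Inductive measurable : (Seq -> Prop) -> Prop :=
  | meas_cyl : forall w t, measurable (cyl w t)
  | meas_compl : forall A, measurable A -> measurable (fun v => ~ A v)
  | meas_cunion : forall A : nat -> Seq -> Prop,
      (forall n, measurable (A n)) -> measurable (fun v => exists n, A n v)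
  | meas_ext : forall A B, measurable A -> (forall v, A v <-> B v) -> measurable B.

Record ProbMeasure := mkPM {
  mu : (Seq -> Prop) -> R;
  mu_nonneg : forall A, measurable A -> 0 <= mu A;
  mu_full : mu (fun _ => True) = 1;
  mu_sigma_add : forall A : nat -> Seq -> Prop,
      (forall n, measurable (A n)) ->
      (forall m n v, m <> n -> A m v -> A n v -> False) ->
      infinite_sum (fun n => mu (A n)) (mu (fun v => exists n, A n v))
}.

Fixpoint cyl_prob (fi : Strategy) (w : Seq) (f0 f1 : Strategy) (t : nat) : R :=
  match t with
  | O => 1
  | S n => cyl_prob fi w f0 f1 n * dprob (fi (hist w f0 f1 n)) (w n)
  end.

(** [P] is the measure P_i^f induced by the pair f = (f0,f1) for expert i
    (i = false means expert 0, i = true means expert 1). *)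
Definition is_induced (f0 f1 : Strategy) (i : bool) (P : ProbMeasure) : Prop :=
  forall w t, mu P (cyl w t) = cyl_prob (if i then f1 else f0) w f0 f1 t.

Definition abs_cont (P Q : ProbMeasure) : Prop :=
  forall A, measurable A -> mu Q A = 0 -> mu P A = 0.

Inductive Verdict := V0 | Vhalf | V1.

Definition vflip (v : Verdict) : Verdict :=
  match v with V0 => V1 | Vhalf => Vhalf | V1 => V0 end.

Definition vof (i : bool) : Verdict := if i then V1 else V0.

Definition Test := Seq -> Strategy -> Strategy -> Verdict.

Definition test_measurable (T : Test) : Prop :=
  forall f0 f1 k, measurable (fun w => T w f0 f1 = k).

Definition anonymous (T : Test) : Prop :=
  forall w f0 f1, T w f0 f1 = vflip (T w f1 f0).

Definition error_free (T : Test) : Prop :=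
  forall (f0 f1 : Strategy) (i : bool) (P : ProbMeasure),
    is_induced f0 f1 (negb i) P -> mu P (fun w => T w f0 f1 = vof i) = 0.

(** If [P0] gave the verdict "expert 0" full mass, its complement would be
    [P0]-null, hence [P1]-null by absolute continuity, so [P1] would give that
    verdict full mass as well.  But error-freeness makes the verdict "expert 0"
    [P1]-null, since [P1] is the measure of expert 1. *)

From Stdlib Require Import Reals Lra Lia Classical FunctionalExtensionality
  PropExtensionality.
Open Scope R_scope.

Lemma pred_ext (A B : Seq -> Prop) : (forall v, A v <-> B v) -> A = B.
Proof.
  intros H; apply functional_extensionality; intros v.
  now apply propositional_extensionality.
Qed.

Lemma measurable_full : measurable (fun _ => True).
Proof.
  apply (meas_ext (cyl (fun _ => true) 0)); [constructor |].
  intros v; split; [easy | intros _ k Hk; lia].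
Qed.

Lemma measurable_empty : measurable (fun _ => False).
Proof.
  apply (meas_ext (fun v => ~ True)); [exact (meas_compl _ measurable_full) | tauto].
Qed.

Lemma infinite_sum_const_eq0 (c l : R) : infinite_sum (fun _ => c) l -> c = 0.
Proof.
  intros Hsum; apply NNPP; intros Hc.
  assert (Heps : Rabs c / 2 > 0) by (apply Rabs_pos_lt in Hc; lra).
  destruct (Hsum _ Heps) as [N HN].
  pose proof (HN N (Nat.le_refl N)) as HN0.
  pose proof (HN (S N) (Nat.le_succ_diag_r N)) as HN1.
  unfold Rdist in HN0, HN1; simpl sum_f_R0 in HN1.
  (* consecutive partial sums differ by [c] yet are both within [|c|/2] of [l] *)
  pose proof (Rabs_triang (sum_f_R0 (fun _ => c) N + c - l)
                          (- (sum_f_R0 (fun _ => c) N - l))) as Htri.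
  rewrite Rabs_Ropp in Htri.
  replace (sum_f_R0 (fun _ => c) N + c - l + - (sum_f_R0 (fun _ => c) N - l))
    with c in Htri by ring.
  lra.
Qed.

Lemma infinite_sum_two (a b : R) :
  infinite_sum (fun n => match n with 0%nat => a | 1%nat => b | _ => 0 end) (a + b).
Proof.
  assert (Hpartial : forall k, sum_f_R0
      (fun n => match n with 0%nat => a | 1%nat => b | _ => 0 end) (S k) = a + b).
  { induction k as [|k IH]; [reflexivity |].
    simpl sum_f_R0 in *; rewrite IH; ring. }
  intros e He; exists 1%nat; intros [|n] Hn; [lia |].
  unfold Rdist; rewrite Hpartial, Rminus_diag, Rabs_R0; exact He.
Qed.

Section Measure.

Variable P : ProbMeasure.

Lemma mu_empty : mu P (fun _ => False) = 0.
Proof.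
  pose proof (mu_sigma_add P (fun _ _ => False) (fun _ => measurable_empty)
                ltac:(tauto)) as Hsum.
  simpl in Hsum.
  rewrite (pred_ext (fun v => exists _ : nat, False) (fun _ => False)) in Hsum
    by firstorder.
  exact (infinite_sum_const_eq0 _ _ Hsum).
Qed.

Lemma mu_union_disjoint (A B : Seq -> Prop) :
  measurable A -> measurable B -> (forall v, A v -> B v -> False) ->
  mu P (fun v => A v \/ B v) = mu P A + mu P B.
Proof.
  intros HA HB Hdisj.
  set (C := fun n : nat => match n with 0%nat => A | 1%nat => B | _ => fun _ => False end).
  assert (HC : forall n, measurable (C n)).
  { intros [|[|n]]; [exact HA | exact HB | exact measurable_empty]. }
  assert (HCdisj : forall m n v, m <> n -> C m v -> C n v -> False).
  { intros [|[|m]] [|[|n]] v; simpl; try tauto; eauto. }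
  pose proof (mu_sigma_add P C HC HCdisj) as Hsum.
  rewrite (pred_ext (fun v => exists n, C n v) (fun v => A v \/ B v)) in Hsum.
  2:{ intros v; split.
      - intros [[|[|n]] Hv]; simpl in Hv; tauto.
      - intros [Hv | Hv]; [exists 0%nat | exists 1%nat]; exact Hv. }
  apply (uniqueness_sum _ _ _ Hsum).
  replace (fun n => mu P (C n))
    with (fun n => match n with 0%nat => mu P A | 1%nat => mu P B | _ => 0 end).
  - apply infinite_sum_two.
  - apply functional_extensionality; intros [|[|n]]; simpl; auto.
    symmetry; exact mu_empty.
Qed.

Lemma mu_compl (A : Seq -> Prop) : measurable A ->
  mu P A + mu P (fun v => ~ A v) = 1.
Proof.
  intros HA.
  rewrite <- mu_union_disjoint by (auto using meas_compl).
  rewrite (pred_ext (fun v => A v \/ ~ A v) (fun _ => True)) by (intros v; tauto).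
  exact (mu_full P).
Qed.

End Measure.

Lemma abs_cont_mu_eq1 (P Q : ProbMeasure) (A : Seq -> Prop) :
  abs_cont P Q -> measurable A -> mu Q A = 1 -> mu P A = 1.
Proof.
  intros Hac HA HQ.
  assert (HQc : mu Q (fun v => ~ A v) = 0) by (pose proof (mu_compl Q A HA); lra).
  pose proof (Hac _ (meas_compl A HA) HQc).
  pose proof (mu_compl P A HA); lra.
Qed.

Theorem mainTheorem1 (f0 f1 : Strategy) (P0 P1 : ProbMeasure)
  (HP0 : is_induced f0 f1 false P0) (HP1 : is_induced f0 f1 true P1)
  (Hac : abs_cont P1 P0)
  (T : Test) (HTm : test_measurable T) (HTa : anonymous T) (HTe : error_free T) :
  mu P0 (fun w => T w f0 f1 = V0) < 1.
Proof.
  set (A := fun w => T w f0 f1 = V0).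
  assert (HP1A : mu P1 A = 0) by exact (HTe f0 f1 false P1 HP1).
  assert (HP0A : mu P0 A <= 1).
  { pose proof (mu_compl P0 A (HTm _ _ _)).
    pose proof (mu_nonneg P0 _ (meas_compl A (HTm _ _ _))); lra. }
  destruct (Rle_lt_or_eq_dec _ _ HP0A) as [Hlt | Heq]; [exact Hlt | exfalso].
  pose proof (abs_cont_mu_eq1 P1 P0 A Hac (HTm _ _ _) Heq); lra.
Qed.
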